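(* Let $p$ be a prime, $k, r \geq 1$, $G_1, \dots, G_k$ finite-dimensional vector spaces over $\mathbb{F}_p$, $G^{\oplus} = G_1 \oplus \cdots \oplus G_k$ with each $G_i$ regarded as a subspace of $G^{\oplus}$, and $f \colon G^{\oplus} \to \mathbb{D}$. Let $\xi > 0$ and let $\psi \colon (G^{\oplus})^{r-1} \times G_1 \times \cdots \times G_k \to \mathbb{F}_p$ be a multilinear form such that \[\mathbb{E}_{a^{(1)}, \dots, a^{(r-1)} \in G^{\oplus},\ d_1 \in G_1, \dots, d_k \in G_k,\ x \in G^{\oplus}}\ \partial_{a^{(1)}} \cdots \partial_{a^{(r-1)}} \partial_{d_1} \cdots \partial_{d_k} f(x)\, \omega^{\psi(a^{(1)}, \dots, a^{(r-1)}, d_1, \dots, d_k)} \geq \xi,\] where $d_i \in G_i$ is viewed in $G^{\oplus}$. Let $i \in [r-1]$ and $j \in [k]$, and for $u \in G_j$ write $\iota_j(u) \in G^{\oplus}$ for the element with $j$-th component $u$ and all other components $0$. Define the multilinear form $\psi'_{ij} \colon (G^{\oplus})^{i-1} \times G_j \times (G^{\oplus})^{r-1-i} \times G_1 \times \cdots \times G_k \to \mathbb{F}_p$ by \begin{align*}\psi'_{ij}(a^{(1)}, \dots, a^{(i-1)}, u_j, a^{(i+1)}, \dots, a^{(r-1)}, d_1, \dots, d_k) =\ & \psi(a^{(1)}, \dots, a^{(i-1)}, \iota_j(u_j), a^{(i+1)}, \dots, a^{(r-1)}, d_1, \dots, d_{j-1}, d_j, d_{j+1}, \dots, d_k) \\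 &- \psi(a^{(1)}, \dots, a^{(i-1)}, \iota_j(d_j), a^{(i+1)}, \dots, a^{(r-1)}, d_1, \dots, d_{j-1}, u_j, d_{j+1}, \dots, d_k).\end{align*} Then $\operatorname{bias} \psi'_{ij} \geq \xi^8$.
   Context: $\mathbb{D} = \{z \in \mathbb{C} : |z| \leq 1\}$, $\omega = e^{2\pi i/p}$, $\mathbb{E}$ is the uniform average, $\partial_u f(x) = f(x+u)\overline{f(x)}$. For a multilinear form $\alpha$ on a product $V_1 \times \cdots \times V_s$ of $\mathbb{F}_p$-vector spaces, $\operatorname{bias}\alpha = \mathbb{E}_{v_1 \in V_1, \dots, v_s \in V_s} \omega^{\alpha(v_1, \dots, v_s)}$. *)

From HB Require Import structures.
From mathcomp Require Import all_boot all_order all_algebra.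
From mathcomp Require Import complex.
From mathcomp Require Import reals trigo.
Set Implicit Arguments. Unset Strict Implicit. Unset Printing Implicit Defensive.
Import Order.TTheory GRing.Theory Num.Theory.
Local Open Scope ring_scope.
Local Open Scope complex_scope.

Definition avg {C : numFieldType} (T : finType) (F : T -> C) : C :=
  (#|T|%:R)^-1 * \sum_(x : T) F x.

Section Setting.
Variables (p : nat) (k : nat) (n : 'I_k -> nat).

Definition Gj (j : 'I_k) := 'rV['F_p]_(n j).
Definition Gsum := {dffun forall j : 'I_k, Gj j}.

Definition gadd (g h : Gsum) : Gsum := [ffun j => g j + h j].
Definition gscale (c : 'F_p) (g : Gsum) : Gsum := [ffun j => c *: g j].

Definition iota (j : 'I_k) (u : Gj j) : Gsum :=
  [ffun l => dfwith (fun l : 'I_k => (0 : Gj l)) u l].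

Definition setA {r : nat} (a : {ffun 'I_r -> Gsum}) (l : 'I_r) (x : Gsum)
  : {ffun 'I_r -> Gsum} := [ffun m => if m == l then x else a m].
Definition setD (d : Gsum) (j : 'I_k) (u : Gj j) : Gsum :=
  [ffun l => dfwith (fun l => d l) u l].

(* psi : (G^+)^r' x G_1 x ... x G_k -> F_p, with the G_1 x..x G_k part
   packed as an element d of Gsum (d j = d_j) *)
Definition multilinear {r' : nat}
  (psi : {ffun 'I_r' -> Gsum} -> Gsum -> 'F_p) : Prop :=
  (forall (a : {ffun 'I_r' -> Gsum}) (d : Gsum) (l : 'I_r') (c : 'F_p) (x y : Gsum),
     psi (setA a l (gadd (gscale c x) y)) d
     = c * psi (setA a l x) d + psi (setA a l y) d) /\
  (forall (a : {ffun 'I_r' -> Gsum}) (d : Gsum) (j : 'I_k) (c : 'F_p) (x y : Gj j),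
     psi a (setD d (c *: x + y)) = c * psi a (setD d x) + psi a (setD d y)).

Variable R : realType.

Definition omega : R[i] :=
  (cos (2 * pi / p%:R)) +i* (sin (2 * pi / p%:R)).
Definition omegaF (x : 'F_p) : R[i] := omega ^+ (nat_of_ord x).

Definition deriv1 (u : Gsum) (f : Gsum -> R[i]) : Gsum -> R[i] :=
  fun x => f (gadd x u) * (f x)^*.
Definition derivs (hs : seq Gsum) (f : Gsum -> R[i]) : Gsum -> R[i] :=
  foldr deriv1 f hs.

Definition shifts {r' : nat} (a : {ffun 'I_r' -> Gsum}) (d : Gsum) : seq Gsum :=
  [seq a l | l <- enum 'I_r'] ++ [seq iota (d j) | j <- enum 'I_k].

(* psi'_{ij}(a^(1..i-1), u_j, a^(i+1..r-1), d): the entry a i is ignored *)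
Definition psi' {r' : nat} (psi : {ffun 'I_r' -> Gsum} -> Gsum -> 'F_p)
  (i : 'I_r') (j : 'I_k) (a : {ffun 'I_r' -> Gsum}) (u : Gj j) (d : Gsum) : 'F_p :=
  psi (setA a i (iota u)) d - psi (setA a i (iota (d j))) (setD d u).

(* The component a i is a dummy variable (psi' does not depend on it), so
   averaging over it as well does not change the value. *)
Definition bias_psi' {r' : nat} (psi : {ffun 'I_r' -> Gsum} -> Gsum -> 'F_p)
  (i : 'I_r') (j : 'I_k) : R[i] :=
  avg (fun a : {ffun 'I_r' -> Gsum} =>
  avg (fun u : Gj j =>
  avg (fun d : Gsum => omegaF (@psi' r' psi i j a u d)))).

End Setting.

From Pilot Require Import Defs.
From HB Require Import structures.
From mathcomp Require Import all_boot all_order all_algebra.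
From mathcomp Require Import complex.
From mathcomp Require Import reals trigo.
From mathcomp Require Import boolp ring lra.
Import Order.TTheory GRing.Theory Num.Theory.
Set Implicit Arguments. Unset Strict Implicit. Unset Printing Implicit Defensive.
Local Open Scope complex_scope.
Local Open Scope ring_scope.
Local Notation iota := Defs.iota.
Local Notation setD := Defs.setD.

(* Let F be the derivative of f in all directions other than a^(i) and iota_j(d_j); it
   depends neither on a_i nor on d_j, and the summand of the hypothesis is
     F(x + a_i + iota d_j) F(x + a_i)^* F(x + iota d_j)^* F(x) omega^psi(a, d).
   The substitution x -> x - iota E, a_i -> a_i - x + iota E, d_j -> E splits off the factor
   F(a_i)^* F(x)^*, which does not depend on E, so by Cauchy-Schwarz the square of the
   average is bounded by the average of |sum_E F(a_i + iota E) F(x - iota E) omega^psi(..)|^2,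
   where psi is evaluated at a_i - x + iota E and d_j = E.  Expanding this square and
   averaging over the translations a_i -> a_i + iota c, x -> x - iota c, E -> E - c leaves the
   F-factors unchanged, while, psi being bilinear in (a_i, d_j), the phase gains
   psi'_ij(.., c, .., d) with d_j = E - E'.  The resulting character sums over c are
   nonnegative, and summing them gives the bias of psi'_ij.  This proves
   bias psi'_ij >= xi^2, hence >= xi^8 since xi <= 1. *)

Section Characters.
Variables (R : realType) (p : nat).
Hypothesis p_prime : prime p.

Local Notation theta := (2 * pi / p%:R : R).
Local Notation w := (omega p R).

Lemma omega_expn m : w ^+ m = cos (theta *+ m) +i* sin (theta *+ m).
Proof.
elim: m => [|m IH]; first by rewrite expr0 mulr0n cos0 sin0.
rewrite exprS IH /omega !(mulrS _ m) cosD sinD.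
apply/eqP; rewrite eq_complex /=; apply/andP; split; apply/eqP => //.
by rewrite addrC mulrC [X in _ + X]mulrC.
Qed.

Lemma omega_expn_p : w ^+ p = 1.
Proof.
have p_neq0 : (p%:R : R) != 0 by rewrite pnatr_eq0 -lt0n prime_gt0.
rewrite omega_expn.
have -> : theta *+ p = pi *+ 2 by rewrite -(mulr_natr theta) divfK // mulr_natl.
by rewrite cos2pi sin2pi.
Qed.

Lemma omega_neq1 : w != 1.
Proof.
have theta_gt0 : 0 < theta.
  by rewrite divr_gt0 ?mulr_gt0 ?pi_gt0 ?ltr0n ?prime_gt0.
have theta_le_pi : theta <= pi.
  rewrite ler_pdivrMr ?ltr0n ?prime_gt0 // [2 * pi]mulrC ler_pM2l ?pi_gt0 //.
  by rewrite (ler_nat R 2 p) prime_gt1.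
apply/negP => /eqP w1.
have [/= cos1 sin0] := (congr1 (@complex.Re R) w1, congr1 (@complex.Im R) w1).
move: theta_le_pi; rewrite le_eqVlt => /orP [/eqP theta_pi | theta_lt_pi].
  by move: cos1; rewrite theta_pi cospi; lra.
by move: (@sin_gt0_pi R theta); rewrite theta_gt0 theta_lt_pi sin0 ltxx => /(_ isT).
Qed.

Lemma conj_omegaM : w^* * w = 1.
Proof.
apply/eqP; rewrite eq_complex /=; apply/andP; split; apply/eqP.
  by rewrite mulNr opprK -!expr2 cos2Dsin2.
by rewrite mulNr mulrC addrN.
Qed.

Lemma omegaF_natr m : omegaF R (m%:R : 'F_p) = w ^+ m.
Proof. by rewrite /omegaF val_Fp_nat // expr_mod // omega_expn_p. Qed.

Lemma omegaF0 : omegaF R (0 : 'F_p) = 1.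
Proof. by rewrite /omegaF expr0. Qed.

Lemma omegaF1 : omegaF R (1 : 'F_p) = w.
Proof. exact: omegaF_natr 1. Qed.

Lemma omegaFD (a b : 'F_p) : omegaF R (a + b) = omegaF R a * omegaF R b.
Proof. by rewrite -(natr_Zp a) -(natr_Zp b) -natrD !omegaF_natr exprD. Qed.

Lemma omegaFMn (a : 'F_p) m : omegaF R (a *+ m) = omegaF R a ^+ m.
Proof. by elim: m => [|m IH]; rewrite ?mulr0n ?omegaF0 // mulrS omegaFD IH exprS. Qed.

Lemma conj_omegaFM (a : 'F_p) : (omegaF R a)^* * omegaF R a = 1.
Proof.
by rewrite /omegaF rmorphXn -exprMn_comm ?conj_omegaM ?expr1n // /GRing.comm mulrC.
Qed.

Lemma normr_omegaF (a : 'F_p) : `|omegaF R a| = 1.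
Proof. by apply/eqP; rewrite -sqrp_eq1 ?normr_ge0 // normCK mulrC conj_omegaFM. Qed.

Lemma omegaFN (a : 'F_p) : omegaF R (- a) = (omegaF R a)^*.
Proof.
by rewrite -[LHS]mul1r -(conj_omegaFM a) -mulrA -omegaFD subrr omegaF0 mulr1.
Qed.

Lemma omegaF_eq1 (a : 'F_p) : (omegaF R a == 1) = (a == 0).
Proof.
have [-> | a_neq0] := eqVneq a 0; first by rewrite omegaF0 eqxx.
apply/negbTE; apply: contraNneq omega_neq1 => wa1; apply/eqP.
by rewrite -omegaF1 -(mulfV a_neq0) -(natr_Zp a^-1) mulr_natr omegaFMn wa1 expr1n.
Qed.

Lemma sum_omegaF_additive_ge0 (V : finZmodType) (l : V -> 'F_p) :
  {morph l : x y / x + y} -> 0 <= \sum_x omegaF R (l x).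
Proof.
move=> lD; have [/forallP l0 | /forallPn [c lc]] := boolP [forall x, l x == 0].
  by under eq_bigr => x _ do rewrite (eqP (l0 x)) omegaF0; rewrite sumr_const ler0n.
set S := \sum_x _.
have S_eq : S * (1 - omegaF R (l c)) = 0.
  apply/eqP; rewrite mulrBr mulr1 subr_eq0; apply/eqP.
  rewrite {1}/S (reindex_inj (addIr c)) /= mulr_suml.
  by apply: eq_bigr => x _; rewrite lD omegaFD.
move/eqP: S_eq; rewrite mulf_eq0 subr_eq0 [1 == _]eq_sym omegaF_eq1 (negbTE lc) orbF.
by move/eqP ->.
Qed.
End Characters.

Lemma morphN_of_morphD (U W : zmodType) (h : U -> W) :
  {morph h : x y / x + y} -> {morph h : x / - x}.
Proof.
move=> hD x; have h0 : h 0 = 0 by apply: (addrI (h 0)); rewrite -hD !addr0.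
by apply: (addrI (h x)); rewrite -hD !subrr h0.
Qed.

Lemma sum_prod3 (M : zmodType) (T U W : finType) (F : (T * U) * W -> M) :
  \sum_o F o = \sum_t \sum_u \sum_w F ((t, u), w).
Proof.
rewrite (pair_bigA _ (fun t u => \sum_w F ((t, u), w))) /=.
transitivity (\sum_(tu : T * U) \sum_w F (tu, w)); last by apply: eq_bigr => -[t u].
by rewrite (pair_bigA _ (fun tu w => F (tu, w))) /=; apply: eq_bigr => -[[t u] w].
Qed.

Lemma sumr_const_mul (M : pzRingType) (T : finType) (x : M) : \sum_(t : T) x = #|T|%:R * x.
Proof. by rewrite sumr_const mulr_natl. Qed.

Section Averages.
Variable C : numFieldType.

Lemma avg3E (T U W : finType) (F : T -> U -> W -> C) :
  avg (fun t => avg (fun u => avg (F t u))) =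
  (#|T| * #|U| * #|W|)%:R^-1 * \sum_t \sum_u \sum_w F t u w.
Proof.
rewrite /avg !natrM !invfM -!mulrA !mulr_sumr; apply: eq_bigr => t _.
by rewrite mulrCA !mulr_sumr; apply: eq_bigr => u _; rewrite mulrCA.
Qed.

Lemma norm_avg_le1 (T : finType) (F : T -> C) :
  (forall t, `|F t| <= 1) -> `|avg F| <= 1.
Proof.
move=> F_le1; rewrite /avg normrM normfV normr_nat.
have [-> | T_neq0] := eqVneq #|T| 0%N; first by rewrite invr0 mul0r ler01.
rewrite ler_pdivrMl ?ltr0n ?lt0n // mulr1 -sumr_const.
by apply: le_trans (ler_norm_sum _ _ _) _; apply: ler_sum.
Qed.
End Averages.

Lemma sqr_norm_sum_le (C : numClosedFieldType) (I : finType) (z : I -> C) :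
  `|\sum_o z o| ^+ 2 <= #|I|%:R * \sum_o `|z o| ^+ 2.
Proof.
set S := \sum_o z o; pose a o := `|z o| ^+ 2; pose b o o' := z o * (z o')^*.
have sqr_distE o o' : `|z o - z o'| ^+ 2 = a o + a o' - (b o o' + b o' o).
  by rewrite /a /b !normCK rmorphB /=; ring.
have sum_bE : \sum_o \sum_o' b o o' = S * S^*.
  by rewrite rmorph_sum mulr_suml; apply: eq_bigr => o _; rewrite mulr_sumr.
have sum_aE : \sum_o \sum_(o' : I) a o = #|I|%:R * \sum_o a o.
  by under eq_bigr => o _ do rewrite sumr_const; rewrite sumrMnl mulr_natl.
(* Lagrange's identity *)
have sumE : \sum_o \sum_o' `|z o - z o'| ^+ 2 = (#|I|%:R * \sum_o a o - S * S^*) *+ 2.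
  under eq_bigr => o _ do rewrite (eq_bigr _ (fun o' _ => sqr_distE o o')) sumrB !big_split.
  rewrite sumrB !big_split /= [\sum_o \sum_o' b o' o]exchange_big /= sum_bE sum_aE.
  rewrite [\sum_o \sum_o' a o']exchange_big /= sum_aE.
  by rewrite mulr2n opprD addrACA.
have : 0 <= \sum_o \sum_o' `|z o - z o'| ^+ 2.
  by apply: sumr_ge0 => o _; apply: sumr_ge0 => o' _; apply: exprn_ge0.
by rewrite sumE -mulr_natr pmulr_lge0 ?ltr0n // subr_ge0 normCK.
Qed.

Section DirectSum.
Variables (p k : nat) (n : 'I_k -> nat).
Local Notation G := (Gsum p n).

Lemma gaddA : associative (@gadd p k n).
Proof. by move=> x y z; apply/ffunP => l; rewrite !ffunE addrA. Qed.

Lemma gaddC : commutative (@gadd p k n).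
Proof. by move=> x y; apply/ffunP => l; rewrite !ffunE addrC. Qed.

Definition gzero : G := [ffun=> 0].
Definition gopp (g : G) : G := [ffun l => - g l].

Lemma gadd0 : left_id gzero (@gadd p k n).
Proof. by move=> x; apply/ffunP => l; rewrite !ffunE add0r. Qed.

Lemma gaddN : left_inverse gzero gopp (@gadd p k n).
Proof. by move=> x; apply/ffunP => l; rewrite !ffunE addNr. Qed.

HB.instance Definition _ := Finite.copy G {dffun forall j : 'I_k, Gj p n j}.
HB.instance Definition _ := GRing.isZmodule.Build G gaddA gaddC gadd0 gaddN.

Lemma gaddE (x y : G) : gadd x y = x + y. Proof. by []. Qed.

Lemma Gsum_addE (x y : G) l : (x + y) l = x l + y l.
Proof. by rewrite -gaddE ffunE. Qed.

Lemma Gsum_oppE (x : G) l : (- x) l = - x l.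
Proof. by rewrite /= ffunE. Qed.

Lemma gscale1 (x : G) : gscale 1 x = x.
Proof. by apply/ffunP => l; rewrite ffunE scale1r. Qed.

Section Component.
Variable j : 'I_k.
Local Notation V := (Gj p n j).

Lemma iota_in (u : V) : iota u j = u.
Proof. by rewrite ffunE dfwith_in. Qed.

Lemma iota_out (u : V) l : j != l -> iota u l = 0.
Proof. by move=> jl; rewrite ffunE dfwith_out. Qed.

Lemma iotaB : {morph @iota p k n j : u v / u - v}.
Proof.
move=> u v; apply/ffunP => l; rewrite Gsum_addE Gsum_oppE.
by have [<- | jl] := eqVneq j l; rewrite ?iota_in ?iota_out ?subr0.
Qed.

HB.instance Definition _ := GRing.isZmodMorphism.Build V G (@iota p k n j) iotaB.

Lemma setD_in (d : G) (u : V) : setD d u j = u.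
Proof. by rewrite ffunE dfwith_in. Qed.

Lemma setD_out (d : G) (u : V) l : j != l -> setD d u l = d l.
Proof. by move=> jl; rewrite ffunE dfwith_out. Qed.

Lemma setD_setD (d : G) (u v : V) : setD (setD d u) v = setD d v.
Proof.
apply/ffunP => l; have [<- | jl] := eqVneq j l; first by rewrite !setD_in.
by rewrite !setD_out.
Qed.

Lemma add_iota (d : G) (e : V) : d + iota e = setD d (d j + e).
Proof.
apply/ffunP => l; rewrite Gsum_addE; have [<- | jl] := eqVneq j l.
  by rewrite iota_in setD_in.
by rewrite iota_out // setD_out // addr0.
Qed.
End Component.

Section Coordinates.
Variables (r' : nat) (i : 'I_r').
Local Notation A := {ffun 'I_r' -> G}.

Lemma setA_in (a : A) x : setA a i x i = x.
Proof. by rewrite ffunE eqxx. Qed.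

Lemma setA_out (a : A) x m : m != i -> setA a i x m = a m.
Proof. by move=> mi; rewrite ffunE (negbTE mi). Qed.

Lemma setA_setA (a : A) x y : setA (setA a i x) i y = setA a i y.
Proof. by apply/ffunP => m; rewrite !ffunE; case: (m == i). Qed.
End Coordinates.
End DirectSum.

Section Derivatives.
Variables (R : realType) (p k : nat) (n : 'I_k -> nat).
Local Notation G := (Gsum p n).
Implicit Types (g : G -> R[i]) (u v : G) (s t : seq G).

Lemma deriv1C u v g : deriv1 u (deriv1 v g) = deriv1 v (deriv1 u g).
Proof.
apply/funext => x; rewrite /deriv1 !gaddE !rmorphM /= !conjCK.
by rewrite -!addrA [v + u]addrC; ring.
Qed.

Lemma derivs_cat s t g : derivs (s ++ t) g = derivs s (derivs t g).
Proof. by rewrite /derivs foldr_cat. Qed.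

Lemma deriv1_derivs u s g : deriv1 u (derivs s g) = derivs s (deriv1 u g).
Proof. by elim: s => //= v s IH; rewrite deriv1C IH. Qed.

Lemma derivsC s t g : derivs s (derivs t g) = derivs t (derivs s g).
Proof. by elim: s g => //= u s IH g; rewrite IH deriv1_derivs. Qed.

Lemma perm_derivs s t g : perm_eq s t -> derivs s g = derivs t g.
Proof.
apply: (@catCA_perm_subst _ _ (fun s => derivs s g)) => s1 s2 s3.
by rewrite !derivs_cat derivsC.
Qed.

Lemma norm_derivs_le1 s g : (forall x, `|g x| <= 1) -> forall x, `|derivs s g x| <= 1.
Proof.
move=> g_le1; elim: s => //= u s IH x.
by rewrite /deriv1 normrM norm_conjC mulr_ile1.
Qed.
End Derivatives.

Section Shifts.
Variables (R : realType) (p k : nat) (n : 'I_k -> nat) (r' : nat) (i : 'I_r') (j : 'I_k).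
Local Notation G := (Gsum p n).
Local Notation A := {ffun 'I_r' -> G}.

Definition other_shifts (a : A) (d : G) : seq G :=
  [seq a l | l <- enum 'I_r' & l != i] ++ [seq iota (d l) | l <- enum 'I_k & l != j].

Lemma perm_shifts (a : A) (d : G) :
  perm_eq (shifts a d) (a i :: iota (d j) :: other_shifts a d).
Proof.
have enum_rem (T : finType) (t : T) : perm_eq (enum T) (t :: [seq l <- enum T | l != t]).
  by rewrite -rem_filter ?enum_uniq // perm_to_rem // mem_enum.
apply: perm_trans (perm_cat (perm_map a (enum_rem _ i))
                            (perm_map (fun l => iota (d l)) (enum_rem _ j))) _.
by rewrite /= perm_cons -cat1s -[_ :: _ ++ _]cat1s perm_catCA.
Qed.

Lemma derivs_shifts (f : G -> R[i]) (a : A) (d : G) (x : G) :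
  let F := derivs (other_shifts a d) f in
  derivs (shifts a d) f x =
  F (x + a i + iota (d j)) * (F (x + a i))^* * (F (x + iota (d j)))^* * F x.
Proof.
rewrite /= (perm_derivs _ (perm_shifts a d)) /= /deriv1 !gaddE rmorphM /= conjCK.
by rewrite !mulrA.
Qed.

Lemma other_shifts_setA (a : A) (b : G) (d : G) : other_shifts (setA a i b) d = other_shifts a d.
Proof.
congr (_ ++ _); apply/eq_in_map => l; rewrite mem_filter => /andP [li _].
by rewrite setA_out.
Qed.

Lemma other_shifts_add_iota (a : A) (d : G) (e : Gj p n j) :
  other_shifts a (d + iota e) = other_shifts a d.
Proof.
congr (_ ++ _); apply/eq_in_map => l; rewrite mem_filter => /andP [lj _].
by rewrite Gsum_addE iota_out 1?eq_sym // addr0.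
Qed.
End Shifts.

Section MultilinearSlots.
Variables (p k : nat) (n : 'I_k -> nat) (r' : nat).
Variable psi : {ffun 'I_r' -> Gsum p n} -> Gsum p n -> 'F_p.
Hypothesis psi_ml : multilinear psi.

Lemma multilinearD_setA l a d x y :
  psi (setA a l (x + y)) d = psi (setA a l x) d + psi (setA a l y) d.
Proof. by have := psi_ml.1 a d l 1 x y; rewrite gscale1 mul1r. Qed.

Lemma multilinearD_setD j a d (u v : Gj p n j) :
  psi a (setD d (u + v)) = psi a (setD d u) + psi a (setD d v).
Proof. by have := psi_ml.2 a d j 1 u v; rewrite scale1r mul1r. Qed.
End MultilinearSlots.

Section BiasBound.
Variables (R : realType) (p k : nat) (n : 'I_k -> nat) (r' : nat).
Variables (f : Gsum p n -> R[i]) (psi : {ffun 'I_r' -> Gsum p n} -> Gsum p n -> 'F_p).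
Variables (i : 'I_r') (j : 'I_k).
Hypothesis p_prime : prime p.
Hypothesis f_le1 : forall x, `|f x| <= 1.
Hypothesis psiD_setA : forall a d x y,
  psi (setA a i (x + y)) d = psi (setA a i x) d + psi (setA a i y) d.
Hypothesis psiD_setD : forall a d (u v : Gj p n j),
  psi a (setD d (u + v)) = psi a (setD d u) + psi a (setD d v).

Local Notation G := (Gsum p n).
Local Notation A := {ffun 'I_r' -> G}.
Local Notation V := (Gj p n j).
Local Notation P := ((A * G) * G)%type.
Local Notation om := (@omegaF p R).

Lemma psiN_setA a d x : psi (setA a i (- x)) d = - psi (setA a i x) d.
Proof. exact: (morphN_of_morphD (psiD_setA a d)). Qed.

Lemma psiN_setD a d (u : V) : psi a (setD d (- u)) = - psi a (setD d u).
Proof. exact: (morphN_of_morphD (psiD_setD a d)). Qed.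

Definition derivs_rest (a : A) (d : G) : G -> R[i] := derivs (other_shifts i j a d) f.

Lemma norm_derivs_rest_le1 a d x : `|derivs_rest a d x| <= 1.
Proof. exact: norm_derivs_le1. Qed.

Lemma derivs_rest_setA a d b : derivs_rest (setA a i b) d = derivs_rest a d.
Proof. by rewrite /derivs_rest other_shifts_setA. Qed.

Lemma derivs_rest_add_iota a d (e : V) : derivs_rest a (d + iota e) = derivs_rest a d.
Proof. by rewrite /derivs_rest other_shifts_add_iota. Qed.

Definition gowers_term (o : P) : R[i] :=
  let: ((a, d), x) := o in derivs (shifts a d) f x * om (psi a d).

Definition reparam (e : V) (o : P) : P :=
  let: ((a, d), x) := o in
  ((setA a i (a i - x + iota (d j + e)), d + iota e), x - iota (d j + e)).

Definition outer_factor (o : P) : R[i] :=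
  let: ((a, d), x) := o in (derivs_rest a d (a i))^* * (derivs_rest a d x)^*.

Definition inner_term (o : P) (E : V) : R[i] :=
  let: ((a, d), x) := o in
  derivs_rest a d (a i + iota E) * derivs_rest a d (x - iota E) *
  om (psi (setA a i (a i - x + iota E)) (setD d E)).

Definition inner_sum (o : P) : R[i] := \sum_E inner_term o E.

Lemma gowers_term_reparam e o :
  gowers_term (reparam e o) = outer_factor o * inner_term o (o.1.2 j + e).
Proof.
case: o => [[a d] x] /=; rewrite (derivs_shifts i j) -/(derivs_rest _ _) derivs_rest_setA derivs_rest_add_iota.
rewrite setA_in Gsum_addE iota_in (add_iota d e).
have -> : x - iota (d j + e) + (a i - x + iota (d j + e)) = a i by rewrite addrCA !subrK.
by rewrite subrK; ring.
Qed.

Lemma reparam_inj e : injective (reparam e).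
Proof.
move=> [[a1 d1] x1] [[a2 d2] x2] /= [a12 /addIr d12 x12]; subst d2.
move/addIr: x12 => x12; subst x2.
have ai12 : a1 i = a2 i.
  by move/(congr1 (fun a : A => a i)): a12; rewrite !setA_in => /addIr /addIr.
congr ((_, _), _); apply/ffunP => m; have [-> | mi] := eqVneq m i; first exact: ai12.
by move/(congr1 (fun a : A => a m)): a12; rewrite !setA_out.
Qed.

Lemma sum_gowers_term_reparam :
  #|V|%:R * \sum_o gowers_term o = \sum_o outer_factor o * inner_sum o.
Proof.
transitivity (\sum_(e : V) \sum_o gowers_term o); first by rewrite sumr_const_mul.
transitivity (\sum_(e : V) \sum_o gowers_term (reparam e o)).
  by apply: eq_bigr => e _; rewrite (reindex_inj (@reparam_inj e)).
rewrite exchange_big /=; apply: eq_bigr => o _.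
under eq_bigr => e _ do rewrite gowers_term_reparam.
by rewrite -mulr_sumr /inner_sum [in RHS](reindex_inj (addrI (o.1.2 j))).
Qed.

Lemma norm_outer_factor_le1 o : `|outer_factor o| <= 1.
Proof. by case: o => [[a d] x]; rewrite normrM !norm_conjC mulr_ile1 ?norm_derivs_rest_le1. Qed.

Lemma sqr_norm_sum_gowers_term_le_inner :
  `|#|V|%:R * \sum_o gowers_term o| ^+ 2 <= #|{: P}|%:R * \sum_o `|inner_sum o| ^+ 2.
Proof.
rewrite sum_gowers_term_reparam; apply: le_trans (sqr_norm_sum_le _) _.
rewrite ler_wpM2l // ler_sum // => o _.
by rewrite normrM exprMn ler_piMl ?exprn_ge0 // exprn_ile1 ?norm_outer_factor_le1.
Qed.

Lemma norm_inner_term_le1 o E : `|inner_term o E| <= 1.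
Proof.
case: o => [[a d] x]; rewrite normrM normr_omegaF // mulr1 normrM.
by rewrite mulr_ile1 ?norm_derivs_rest_le1.
Qed.

Definition translate (c : V) (o : P) : P :=
  let: ((a, d), x) := o in ((setA a i (a i + iota c), d), x - iota c).

Lemma translate_inj c : injective (translate c).
Proof.
move=> [[a1 d1] x1] [[a2 d2] x2] /= [a12 d12 /addIr x12]; subst d2 x2.
have ai12 : a1 i = a2 i.
  by move/(congr1 (fun a : A => a i)): a12; rewrite !setA_in => /addIr.
congr ((_, _), _); apply/ffunP => m; have [-> | mi] := eqVneq m i; first exact: ai12.
by move/(congr1 (fun a : A => a m)): a12; rewrite !setA_out.
Qed.

Definition char_sum (a : A) (d : G) : R[i] := \sum_(c : V) om (psi' psi i a c d).

Lemma char_sum_ge0 a d : 0 <= char_sum a d.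
Proof.
apply: sum_omegaF_additive_ge0 => // u v.
by rewrite /psi' raddfD psiD_setA psiD_setD; ring.
Qed.

Lemma inner_term_translate c o E E' :
  inner_term (translate c o) (E - c) * (inner_term (translate c o) (E' - c))^* =
  inner_term o E * (inner_term o E')^* * om (psi' psi i o.1.1 c (setD o.1.2 (E - E'))).
Proof.
case: o => [[a d] x] /=; rewrite !derivs_rest_setA setA_in !setA_setA.
have shift_aE Y : a i + iota c + iota (Y - c) = a i + iota Y.
  by rewrite raddfB addrACA subrr addr0.
have shift_xE Y : x - iota c - iota (Y - c) = x - iota Y.
  by rewrite raddfB opprB addrA subrK.
rewrite !shift_aE !shift_xE.
set psi1 := psi _ (setD d (E - c)); set psi2 := psi _ (setD d (E' - c)).
set phi1 := psi _ (setD d E); set phi2 := psi _ (setD d E').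
set phase := psi' _ _ _ _ _.
have phaseE : psi1 - psi2 = phi1 - phi2 + phase.
  rewrite /psi1 /psi2 /phi1 /phi2 /phase /psi' setD_in setD_setD !raddfB.
  by rewrite !(psiD_setA, psiN_setA) !(psiD_setD, psiN_setD); ring.
rewrite !rmorphM /= -!omegaFN //.
transitivity (derivs_rest a d (a i + iota E) * derivs_rest a d (x - iota E) *
  (derivs_rest a d (a i + iota E') * derivs_rest a d (x - iota E'))^* * (om psi1 * om (- psi2))).
  by rewrite rmorphM; ring.
rewrite -omegaFD //; rewrite phaseE !omegaFD //; ring.
Qed.

Lemma sum_translate_inner_term o E E' :
  \sum_(c : V) inner_term (translate c o) (E - c) * (inner_term (translate c o) (E' - c))^* =
  inner_term o E * (inner_term o E')^* * char_sum o.1.1 (setD o.1.2 (E - E')).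
Proof. by rewrite /char_sum mulr_sumr; apply: eq_bigr => c _; rewrite inner_term_translate. Qed.

Lemma sum_sqr_inner_sumE :
  #|V|%:R * \sum_o `|inner_sum o| ^+ 2 =
  \sum_o \sum_E \sum_E' inner_term o E * (inner_term o E')^* * char_sum o.1.1 (setD o.1.2 (E - E')).
Proof.
have translateE c : \sum_o `|inner_sum o| ^+ 2 = \sum_o \sum_E \sum_E'
    inner_term (translate c o) (E - c) * (inner_term (translate c o) (E' - c))^*.
  rewrite (reindex_inj (@translate_inj c)); apply: eq_bigr => o _.
  rewrite normCK /inner_sum rmorph_sum mulr_suml (reindex_inj (addIr (- c))).
  by apply: eq_bigr => E _; rewrite mulr_sumr (reindex_inj (addIr (- c))).
transitivity (\sum_(c : V) \sum_o `|inner_sum o| ^+ 2); first by rewrite sumr_const_mul.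
under eq_bigr => c _ do rewrite (translateE c).
rewrite exchange_big /=; apply: eq_bigr => o _.
rewrite exchange_big /=; apply: eq_bigr => E _.
by rewrite exchange_big /=; apply: eq_bigr => E' _; rewrite sum_translate_inner_term.
Qed.

Lemma sum_sqr_inner_sum_le :
  #|V|%:R * \sum_o `|inner_sum o| ^+ 2 <=
  \sum_(o : P) \sum_(E : V) \sum_(E' : V) char_sum o.1.1 (setD o.1.2 (E - E')).
Proof.
rewrite -[X in X <= _]ger0_norm ?mulr_ge0 ?sumr_ge0 // => [|o _]; last exact: exprn_ge0.
rewrite sum_sqr_inner_sumE.
apply: le_trans (ler_norm_sum _ _ _) _; apply: ler_sum => o _.
apply: le_trans (ler_norm_sum _ _ _) _; apply: ler_sum => E _.
apply: le_trans (ler_norm_sum _ _ _) _; apply: ler_sum => E' _.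
rewrite normrM (ger0_norm (char_sum_ge0 _ _)) ler_piMl ?char_sum_ge0 //.
by rewrite normrM norm_conjC mulr_ile1 ?norm_inner_term_le1.
Qed.

Lemma sum_char_sum_setD :
  \sum_(o : P) \sum_(E : V) \sum_(E' : V) char_sum o.1.1 (setD o.1.2 (E - E')) =
  #|G|%:R * (#|V|%:R * (#|V|%:R * \sum_a \sum_d char_sum a d)).
Proof.
have sum_setDE a d : \sum_(E : V) \sum_(E' : V) char_sum a (setD d (E - E')) =
    #|V|%:R * \sum_(e : V) char_sum a (d + iota e).
  transitivity (\sum_(E' : V) \sum_(e : V) char_sum a (d + iota e)); last first.
    by rewrite sumr_const_mul.
  rewrite exchange_big /=; apply: eq_bigr => E' _.
  have shift_inj : injective (fun e : V => d j + e + E') by move=> e1 e2 /addIr /addrI.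
  by rewrite (reindex_inj shift_inj) /=; apply: eq_bigr => e _; rewrite addrK add_iota.
rewrite sum_prod3 !mulr_sumr; apply: eq_bigr => a _ /=.
transitivity (\sum_(x : G) \sum_d #|V|%:R * \sum_(e : V) char_sum a (d + iota e)).
  by rewrite exchange_big /=; apply: eq_bigr => x _; apply: eq_bigr => d _; rewrite sum_setDE.
rewrite sumr_const_mul -mulr_sumr exchange_big /=; congr (_ * (_ * _)).
transitivity (\sum_(e : V) \sum_d char_sum a d); last by rewrite sumr_const_mul.
by apply: eq_bigr => e _; rewrite [in RHS](reindex_inj (addIr (iota e))).
Qed.

Lemma sqr_norm_sum_gowers_term_le :
  #|V|%:R * `|\sum_o gowers_term o| ^+ 2 <=
  #|{: P}|%:R * (#|G|%:R * \sum_a \sum_d char_sum a d).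
Proof.
set v : R[i] := #|V|%:R; set S := \sum_o gowers_term o; set Q := \sum_a _.
have v_gt0 : 0 < v by rewrite ltr0n; apply/card_gt0P; exists 0.
have := sqr_norm_sum_gowers_term_le_inner; rewrite normrM ger0_norm ?ler0n // exprMn -/v => le1.
have := sum_sqr_inner_sum_le; rewrite sum_char_sum_setD -/v => le2.
rewrite -(ler_pM2l (mulr_gt0 v_gt0 v_gt0)).
have -> : v * v * (v * `|S| ^+ 2) = v * (v ^+ 2 * `|S| ^+ 2) by ring.
have -> : v * v * (#|{: P}|%:R * (#|G|%:R * Q)) = #|{: P}|%:R * (#|G|%:R * (v * (v * Q))).
  by ring.
apply: le_trans (ler_wpM2l (ltW v_gt0) le1) _.
by rewrite mulrCA; apply: ler_wpM2l le2.
Qed.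

Lemma sqr_norm_avg_gowers_le_bias :
  `|avg (fun a : A => avg (fun d : G => avg (fun x : G =>
     derivs (shifts a d) f x * om (psi a d))))| ^+ 2 <= bias_psi' R psi i j.
Proof.
rewrite /bias_psi' !avg3E.
have -> : \sum_(a : A) \sum_(d : G) \sum_(x : G) derivs (shifts a d) f x * om (psi a d) =
          \sum_o gowers_term o by rewrite sum_prod3.
have -> : \sum_(a : A) \sum_(u : V) \sum_(d : G) om (psi' psi i a u d) =
          \sum_a \sum_d char_sum a d by apply: eq_bigr => a _; rewrite exchange_big.
have := sqr_norm_sum_gowers_term_le; rewrite !card_prod.
rewrite normrM normfV normr_nat exprMn !natrM.
set N : R[i] := #|A|%:R; set g : R[i] := #|G|%:R; set v : R[i] := #|V|%:R => le.
have N_gt0 : 0 < N by rewrite ltr0n; apply/card_gt0P; exists [ffun=> 0].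
have g_gt0 : 0 < g by rewrite ltr0n; apply/card_gt0P; exists 0.
have v_gt0 : 0 < v by rewrite ltr0n; apply/card_gt0P; exists 0.
rewrite ler_pdivlMl ?mulr_gt0 //.
have -> : N * v * g * ((N * g * g)^-1 ^+ 2 * `|\sum_o gowers_term o| ^+ 2) =
          (N * g * g * g)^-1 * (v * `|\sum_o gowers_term o| ^+ 2).
  by field; rewrite (gt_eqF g_gt0) (gt_eqF N_gt0).
by rewrite ler_pdivrMl ?mulr_gt0 // !mulrA in le *.
Qed.
End BiasBound.

Theorem proposition28 (R : realType) (p : nat) (k r : nat) (n : 'I_k -> nat)
  (f : Gsum p n -> R[i]) (xi : R)
  (psi : {ffun 'I_(r - 1) -> Gsum p n} -> Gsum p n -> 'F_p)
  (i : 'I_(r - 1)) (j : 'I_k) :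
  prime p -> (1 <= k)%N -> (1 <= r)%N ->
  (forall x, `|f x| <= 1) ->
  0 < xi ->
  multilinear psi ->
  (xi%:C <=
    avg (fun a : {ffun 'I_(r - 1) -> Gsum p n} =>
    avg (fun d : Gsum p n =>
    avg (fun x : Gsum p n =>
      derivs (shifts a d) f x * omegaF R (psi a d))))) ->
  (xi ^+ 8)%:C <= bias_psi' R psi i j.
Proof.
(* [1 <= k] and [1 <= r] already follow from the existence of [i] and [j]. *)
move=> p_prime _ _ f_le1 xi_gt0 psi_ml; set s := avg _ => xi_le_s.
have s_ge0 : 0 <= s by apply: le_trans xi_le_s; rewrite lecR ltW.
have s_le1 : `|s| <= 1.
  apply: norm_avg_le1 => a; apply: norm_avg_le1 => d; apply: norm_avg_le1 => x.
  by rewrite normrM normr_omegaF // mulr1 norm_derivs_le1.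
have xi_le1 : xi <= 1 by rewrite -lecR (le_trans xi_le_s) // -(ger0_norm s_ge0).
apply: le_trans _ (sqr_norm_avg_gowers_le_bias p_prime f_le1 (multilinearD_setA psi_ml i)
                     (multilinearD_setD psi_ml (j:=j))).
rewrite ger0_norm //.
apply: (@le_trans _ _ (xi%:C ^+ 2)); last by rewrite lerXn2r // nnegrE lecR ltW.
by rewrite -rmorphXn lecR ler_wiXn2l // ltW.
Qed.
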